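(* Let $M_\bullet=(M_n,\mathrm{tr}_n,e_{n+1})_{n\ge0}$ be a Markov tower of modulus $d$, and fix integers $j\ge0$, $k\ge1$. For $i\ge0$ and $\ell\ge1$ define $f^{i+\ell}_i:=d^{\ell(\ell-1)}(e_{i+\ell}e_{i+\ell-1}\cdots e_{i+1})(e_{i+\ell+1}e_{i+\ell}\cdots e_{i+2})\cdots(e_{i+2\ell-1}e_{i+2\ell-2}\cdots e_{i+\ell})\in M_{i+2\ell}$, and for $n\ge1$ set $g_n:=f^{j+nk}_{j+(n-1)k}\in M_{j+(n+1)k}$. Then $M_{j+k\bullet}:=(M_{j+nk},\mathrm{tr}_{j+nk},g_{n+1})_{n\ge0}$ is a Markov tower of modulus $d^k$ (i.e. the $g_n$ are projections satisfying the Temperley–Lieb–Jones relations with $d^{-2}$ replaced by $d^{-2k}$, $g_n$ implements the trace-preserving conditional expectation $M_{j+nk}\to M_{j+(n-1)k}$, this expectation applied from $M_{j+(n+1)k}$ sends $g_n$ to $d^{-2k}$, and $M_{j+(n+1)k}g_n=M_{j+nk}g_n$).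
   Context: A Markov tower $M_\bullet=(M_n,\mathrm{tr}_n,e_{n+1})_{n\ge0}$ is a sequence of finite-dimensional von Neumann algebras with unital inclusions $M_n\subset M_{n+1}$, faithful tracial states with $\mathrm{tr}_{n+1}|_{M_n}=\mathrm{tr}_n$, and projections $e_n\in M_{n+1}$ ($n\ge1$) such that: (M1) $e_i=e_i^2=e_i^*$, $e_ie_j=e_je_i$ for $|i-j|>1$, and $e_ie_{i\pm1}e_i=d^{-2}e_i$ for a fixed $d>0$ (the modulus); (M2) $e_nxe_n=E_n(x)e_n$ for $x\in M_n$, where $E_n:M_n\to M_{n-1}$ is the trace-preserving conditional expectation; (M3) $E_{n+1}(e_n)=d^{-2}$; (M4) $M_{n+1}e_n=M_ne_n$. *)

From HB Require Import structures.
From mathcomp Require Import all_boot all_order all_algebra.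
Set Implicit Arguments. Unset Strict Implicit. Unset Printing Implicit Defensive.
Import Order.TTheory GRing.Theory Num.Theory.
Local Open Scope ring_scope.

(* Ambient setting: a unital algebra [A] over a numerically closed field [C]
   (the scalar field; for the paper C = complex numbers), containing the
   whole tower M_0 ⊂ M_1 ⊂ ... as unital *-subalgebras (inclusions are
   literal set inclusions inside the inductive-limit algebra A). *)

Definition star_algebra (C : numClosedFieldType) (A : algType C)
  (star : A -> A) : Prop :=
  [/\ forall x, star (star x) = x,
      forall x y, star (x + y) = star x + star y,
      forall (a : C) x, star (a *: x) = Num.conj a *: star x
    & forall x y, star (x * y) = star y * star x].

Definition fd_star_subalgebra (C : numClosedFieldType) (A : algType C)
  (star : A -> A) (S : A -> Prop) : Prop :=
  [/\ S 1,
      forall x y, S x -> S y -> S (x + y),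
      forall (a : C) x, S x -> S (a *: x),
      forall x y, S x -> S y -> S (x * y)
    & forall x, S x -> S (star x)] /\
    (exists s : seq A, forall x,
        S x <-> exists c : 'I_(size s) -> C, x = \sum_(i < size s) c i *: s`_i).

Definition faithful_tracial_state (C : numClosedFieldType) (A : algType C)
  (star : A -> A) (S : A -> Prop) (t : A -> C) : Prop :=
  [/\ forall (a : C) x y, S x -> S y -> t (a *: x + y) = a * t x + t y,
      t 1 = 1,
      forall x y, S x -> S y -> t (x * y) = t (y * x),
      forall x, S x -> 0 <= t (star x * x)
    & forall x, S x -> t (star x * x) = 0 -> x = 0].

(* [cexp M tr n x y] : y = E_n(x), where E_n : M_n -> M_{n-1} is the
   trace-preserving conditional expectation, i.e. y ∈ M_{n-1} and
   tr_n(y z) = tr_n(x z) for all z ∈ M_{n-1}. (Unique since tr is faithful.) *)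
Definition cexp (C : numClosedFieldType) (A : algType C)
  (M : nat -> A -> Prop) (tr : nat -> A -> C) (n : nat) (x y : A) : Prop :=
  M n.-1 y /\ forall z, M n.-1 z -> tr n (y * z) = tr n (x * z).

(* Markov tower (M_n, tr_n, e_{n+1})_{n>=0} of modulus d; e is indexed from 1
   (the value e 0 is irrelevant). *)
Definition markov_tower (C : numClosedFieldType) (A : algType C)
  (star : A -> A) (M : nat -> A -> Prop) (tr : nat -> A -> C)
  (e : nat -> A) (d : C) : Prop :=
  0 < d /\ [/\
      forall n, fd_star_subalgebra star (M n) /\ faithful_tracial_state star (M n) (tr n),
      forall n x, M n x -> M n.+1 x /\ tr n.+1 x = tr n x,
      forall n, (1 <= n)%N -> M n.+1 (e n)
    &
      [/\ forall i, (1 <= i)%N -> e i * e i = e i /\ star (e i) = e i,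
          forall i j, (1 <= i)%N -> (i.+1 < j)%N -> e i * e j = e j * e i
        & forall i, (1 <= i)%N ->
            e i * e i.+1 * e i = (d ^+ 2)^-1 *: e i /\
            e i.+1 * e i * e i.+1 = (d ^+ 2)^-1 *: e i.+1]] /\
    [/\
      forall n, (1 <= n)%N -> forall x, M n x ->
        exists y, cexp M tr n x y /\ e n * x * e n = y * e n,
      forall n, (1 <= n)%N -> cexp M tr n.+1 (e n) ((d ^+ 2)^-1 %:A)
    &
      forall n, (1 <= n)%N ->
        (forall x, M n.+1 x -> exists y, M n y /\ x * e n = y * e n) /\
        (forall y, M n y -> exists x, M n.+1 x /\ y * e n = x * e n)].

Definition fproj (C : numClosedFieldType) (A : algType C)
  (e : nat -> A) (d : C) (i l : nat) : A :=
  d ^+ (l * l.-1) *: \prod_(m < l) \prod_(t < l) e (i + l + m - t)%N.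

Definition gproj (C : numClosedFieldType) (A : algType C)
  (e : nat -> A) (d : C) (j k n : nat) : A :=
  fproj e d (j + n.-1 * k) k.

From HB Require Import structures.
From mathcomp Require Import all_boot all_order all_algebra.
From mathcomp Require Import zify ring lra.
Set Implicit Arguments. Unset Strict Implicit. Unset Printing Implicit Defensive.
Import Order.TTheory GRing.Theory Num.Theory.
Local Open Scope ring_scope.

(* Write F_p^l := f^{p+l}_p. Splitting off the first factor of each block gives
   F_p^{l+1} = d^{2l} (e_{p+l+1} ... e_{p+2l}) e_{p+2l+1} F_p^l (e_{p+2l} ... e_{p+l+1})
   and similarly F_{p+1}^l = d^{2l} (e_{p+l+1} ... e_{p+2l}) F_p^l (e_{p+2l} ... e_{p+l+1}).
   With these recursions one shows by induction on l that F_p^l is a projection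
   implementing the conditional expectation M_{p+l} -> M_p, with tr(F_p^l z) =
   d^{-2l} tr z on M_{p+l} and M_{p+2l} F_p^l = M_{p+l} F_p^l: each property of
   F_p^{l+1} reduces to the corresponding one of F_p^l (or F_{p+1}^l) and to the
   Jones relations of e_{p+2l}, e_{p+2l+1}. The relations between F_p^l and
   F_{p+l}^l then follow from the Markov property and faithfulness of the trace;
   g_n = F_{j+(n-1)k}^k. *)

Section CommutingProducts.
Variable R : pzSemiRingType.
Implicit Types x y z u w : R.

Lemma mulrCA_comm x y z : GRing.comm x y -> x * (y * z) = y * (x * z).
Proof. by move=> h; rewrite !mulrA h. Qed.

Lemma mulr_subst2 x y w z : x * y = w -> x * (y * z) = w * z.
Proof. by move=> <-; rewrite mulrA. Qed.

Lemma mulr_subst3 x y u w z : x * y * u = w -> x * (y * (u * z)) = w * z.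
Proof. by move=> <-; rewrite !mulrA. Qed.

Lemma big_split_comm n (c r : nat -> R) :
  (forall m m', (m' < m)%N -> (m < n)%N -> GRing.comm (c m) (r m')) ->
  \prod_(m < n) (c m * r m) = (\prod_(m < n) c m) * (\prod_(m < n) r m).
Proof.
elim: n => [|n IH] h; first by rewrite !big_ord0 mulr1.
rewrite !big_ord_recr /= IH; last by move=> m m' h1 h2; apply: h => //; apply: ltnW.
have hc : GRing.comm (c n) (\prod_(i < n) r i) by apply: commr_prod => i _; apply: h.
by rewrite -!mulrA; congr (_ * _); rewrite !mulrA hc.
Qed.

End CommutingProducts.

Lemma commrZ (K : pzRingType) (B : algType K) (y x : B) (a : K) :
  GRing.comm y x -> GRing.comm y (a *: x).
Proof. by rewrite /GRing.comm => h; rewrite -scalerAr -scalerAl h. Qed.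

Section StarAlgebra.
Variables (C : numClosedFieldType) (A : algType C) (star : A -> A).
Hypothesis hstar : star_algebra star.

Lemma starK x : star (star x) = x. Proof. by case: hstar. Qed.
Lemma starD x y : star (x + y) = star x + star y. Proof. by case: hstar. Qed.
Lemma starZ (a : C) x : star (a *: x) = a^* *: star x. Proof. by case: hstar. Qed.
Lemma starM x y : star (x * y) = star y * star x. Proof. by case: hstar. Qed.

Lemma star0 : star 0 = 0.
Proof. by have := starZ 0 0; rewrite scale0r conjC0 scale0r. Qed.

Lemma star1 : star 1 = 1.
Proof. by have := starM (star 1) 1; rewrite mulr1 starK mulr1 => <-. Qed.

Lemma starN x : star (- x) = - star x.
Proof. by rewrite -scaleN1r starZ rmorphN1 scaleN1r. Qed.

Lemma starB x y : star (x - y) = star x - star y.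
Proof. by rewrite starD starN. Qed.

Lemma starZ_real (a : C) x : a \is Num.real -> star (a *: x) = a *: star x.
Proof. by move=> ha; rewrite starZ conj_Creal. Qed.

Lemma star_prod n (f : nat -> A) :
  star (\prod_(i < n) f i) = \prod_(i < n) star (f (n.-1 - i)%N).
Proof.
elim: n => [|n IH]; first by rewrite !big_ord0 star1.
rewrite big_ord_recr big_ord_recl /= starM IH subn0; congr (_ * _).
by apply: eq_bigr => i _; congr (star (f _)); rewrite /bump /=; lia.
Qed.

End StarAlgebra.

Section MarkovTower.
Variables (C : numClosedFieldType) (A : algType C) (star : A -> A)
  (M : nat -> A -> Prop) (tr : nat -> A -> C) (e : nat -> A) (d : C).
Hypothesis hstar : star_algebra star.
Hypothesis hmt : markov_tower star M tr e d.

Let lam : C := (d ^+ 2)^-1.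

Lemma d_gt0 : 0 < d. Proof. by case: hmt. Qed.
Lemma d_neq0 : d != 0. Proof. by rewrite gt_eqF // d_gt0. Qed.

Lemma tower_algebra n :
  fd_star_subalgebra star (M n) /\ faithful_tracial_state star (M n) (tr n).
Proof. by case: hmt => _ [[h _ _ _] _]; apply: h. Qed.

Lemma mem1 n : M n 1.
Proof. by case: (tower_algebra n) => [[[h _ _ _ _] _] _]. Qed.
Lemma memD n x y : M n x -> M n y -> M n (x + y).
Proof. by case: (tower_algebra n) => [[[_ h _ _ _] _] _]; apply: h. Qed.
Lemma memZ n (a : C) x : M n x -> M n (a *: x).
Proof. by case: (tower_algebra n) => [[[_ _ h _ _] _] _]; apply: h. Qed.
Lemma memM n x y : M n x -> M n y -> M n (x * y).
Proof. by case: (tower_algebra n) => [[[_ _ _ h _] _] _]; apply: h. Qed.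
Lemma mem_star n x : M n x -> M n (star x).
Proof. by case: (tower_algebra n) => [[[_ _ _ _ h] _] _]; apply: h. Qed.
Lemma mem0 n : M n 0. Proof. by rewrite -(scale0r 1); apply/memZ/mem1. Qed.
Lemma memN n x : M n x -> M n (- x). Proof. by move=> h; rewrite -scaleN1r; apply: memZ. Qed.
Lemma memB n x y : M n x -> M n y -> M n (x - y).
Proof. by move=> h1 h2; apply: memD => //; apply: memN. Qed.
Lemma mem_alg n (a : C) : M n (a%:A). Proof. by apply/memZ/mem1. Qed.

Lemma mem_prod n k (f : 'I_k -> A) : (forall i, M n (f i)) -> M n (\prod_(i < k) f i).
Proof. by move=> h; apply: (big_ind (M n)) => //; [exact: mem1 | exact: memM]. Qed.

Lemma tr_linear n (a : C) x y : M n x -> M n y -> tr n (a *: x + y) = a * tr n x + tr n y.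
Proof. by case: (tower_algebra n) => _ [? ? ? ? ?]; auto. Qed.
Lemma tr_comm n x y : M n x -> M n y -> tr n (x * y) = tr n (y * x).
Proof. by case: (tower_algebra n) => _ [? ? ? ? ?]; auto. Qed.
Lemma tr_faithful n x : M n x -> tr n (star x * x) = 0 -> x = 0.
Proof. by case: (tower_algebra n) => _ [? ? ? ? ?]; auto. Qed.

Lemma tr0 n : tr n 0 = 0.
Proof.
have := tr_linear 1 (mem0 n) (mem0 n); rewrite scale1r addr0 mul1r => h.
by apply: (@addrI _ (tr n 0)); rewrite addr0 -h.
Qed.
Lemma trD n x y : M n x -> M n y -> tr n (x + y) = tr n x + tr n y.
Proof. by move=> hx hy; have := tr_linear 1 hx hy; rewrite scale1r mul1r. Qed.
Lemma trZ n (a : C) x : M n x -> tr n (a *: x) = a * tr n x.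
Proof. by move=> hx; have := tr_linear a hx (mem0 n); rewrite addr0 tr0 addr0. Qed.
Lemma trB n x y : M n x -> M n y -> tr n (x - y) = tr n x - tr n y.
Proof. by move=> hx hy; rewrite trD -?scaleN1r ?trZ ?mulN1r //; apply: memZ. Qed.

Lemma mem_succ n x : M n x -> M n.+1 x.
Proof. by case: hmt => _ [[_ h _ _] _] hx; case: (h n x hx). Qed.
Lemma tr_succ n x : M n x -> tr n.+1 x = tr n x.
Proof. by case: hmt => _ [[_ h _ _] _] hx; case: (h n x hx). Qed.

Lemma mem_le n m x : (n <= m)%N -> M n x -> M m x.
Proof.
move=> /subnK <-; elim: (m - n)%N => [|i IH] hx; first by rewrite add0n.
by rewrite addSn; apply/mem_succ/IH.
Qed.

Lemma tr_le n m x : (n <= m)%N -> M n x -> tr m x = tr n x.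
Proof.
move=> /subnK <-; elim: (m - n)%N => [|i IH] hx; first by rewrite add0n.
by rewrite addSn tr_succ ?IH //; apply: mem_le hx; rewrite leq_addl.
Qed.

Lemma mem_e n m : (1 <= n)%N -> (n < m)%N -> M m (e n).
Proof. by case: hmt => _ [[_ _ h _] _] h1 h2; apply: (mem_le h2); apply: h. Qed.

Lemma e_idem i : (1 <= i)%N -> e i * e i = e i.
Proof. by case: hmt => _ [[_ _ _ [h _ _]] _] hi; case: (h i hi). Qed.
Lemma e_star i : (1 <= i)%N -> star (e i) = e i.
Proof. by case: hmt => _ [[_ _ _ [h _ _]] _] hi; case: (h i hi). Qed.
Lemma e_comm_far i j : (1 <= i)%N -> (i.+1 < j)%N -> GRing.comm (e j) (e i).
Proof. by case: hmt => _ [[_ _ _ [_ h _]] _] h1 h2; rewrite /GRing.comm (h i j). Qed.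
Lemma e_eS_e i : (1 <= i)%N -> e i * e i.+1 * e i = lam *: e i.
Proof. by case: hmt => _ [[_ _ _ [_ _ h]] _] hi; case: (h i hi). Qed.
Lemma eS_e_eS i : (1 <= i)%N -> e i.+1 * e i * e i.+1 = lam *: e i.+1.
Proof. by case: hmt => _ [[_ _ _ [_ _ h]] _] hi; case: (h i hi). Qed.

Lemma cexp_e n x : (1 <= n)%N -> M n x ->
  exists y, cexp M tr n x y /\ e n * x * e n = y * e n.
Proof. by case: hmt => _ [_ [h _ _]] hn hx; apply: h. Qed.
Lemma pushdown_e n x : (1 <= n)%N -> M n.+1 x -> exists y, M n y /\ x * e n = y * e n.
Proof. by case: hmt => _ [_ [_ _ h]] hn hx; case: (h n hn) => h1 _; apply: h1. Qed.

Lemma tr_eM n z : (1 <= n)%N -> M n z -> tr n.+1 (e n * z) = lam * tr n z.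
Proof.
case: hmt => _ [_ [_ hM3 _]] hn hz; case: (hM3 n hn) => _ h; rewrite -h //.
by rewrite mulr_algl trZ ?tr_succ //; apply: mem_succ.
Qed.

Lemma lam_real : lam \is Num.real.
Proof. by apply/gtr0_real; rewrite /lam invr_gt0 exprn_gt0 // d_gt0. Qed.
Lemma lam_neq0 : lam != 0. Proof. by rewrite /lam invr_eq0 expf_neq0 // d_neq0. Qed.
Lemma lamX_neq0 n : lam ^+ n != 0. Proof. by rewrite expf_neq0 // lam_neq0. Qed.
Lemma d2_lam : d ^+ 2 * lam = 1. Proof. by rewrite /lam mulfV // expf_neq0 // d_neq0. Qed.
Lemma d2n_lamn n : d ^+ (2 * n) * lam ^+ n = 1.
Proof. by rewrite exprM -exprMn d2_lam expr1n. Qed.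
Lemma lamS l : (1 <= l)%N -> lam ^+ l.-1 * lam = lam ^+ l.
Proof. by case: l => // n _; rewrite exprSr. Qed.
Lemma d2lE l : (1 <= l)%N -> d ^+ (2 * l) = (lam ^+ l.-1 * lam)^-1.
Proof.
move=> hl; rewrite lamS //; apply: (mulIf (lamX_neq0 l)).
by rewrite d2n_lamn mulVf // lamX_neq0.
Qed.
Lemma d2l_real l : d ^+ (2 * l) \is Num.real.
Proof. by apply: rpredX; apply: gtr0_real; exact: d_gt0. Qed.

Lemma eq_by_tr a b y1 y2 : (a <= b)%N -> M a y1 -> M a y2 ->
  (forall z, M a z -> tr b (y1 * z) = tr b (y2 * z)) -> y1 = y2.
Proof.
move=> hab h1 h2 h.
have hs : M a (star (y1 - y2)) by apply/mem_star/memB.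
suff : star (y1 - y2) = 0.
  by move/(congr1 star); rewrite (starK hstar) (star0 hstar) => /eqP; rewrite subr_eq0 => /eqP.
apply: (tr_faithful hs); rewrite (starK hstar) mulrBl trB; try by apply: memM.
by rewrite -(tr_le hab (memM h1 hs)) -(tr_le hab (memM h2 hs)) h // subrr.
Qed.

Lemma e_comm_mem m x : (1 <= m)%N -> M m.-1 x -> GRing.comm (e m) x.
Proof.
move=> hm hx.
have key y : M m.-1 y -> e m * y * e m = y * e m.
  move=> hy; case: (cexp_e hm (mem_le (leq_pred m) hy)) => w [[hw hc] ->].
  by congr (_ * _); apply: (eq_by_tr (leq_pred m)).
have := congr1 star (key _ (mem_star hx)).
rewrite !(starM hstar) (starK hstar) e_star // => h.
by rewrite /GRing.comm -h mulrA key.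
Qed.

Lemma mem_comm_e y n m : (1 <= m)%N -> (n < m)%N -> M n y -> GRing.comm y (e m).
Proof.
by move=> h1 h2 hy; apply/commr_sym/e_comm_mem => //; apply: (mem_le _ hy); lia.
Qed.


Lemma e_down_up a n : (1 <= a)%N ->
  (\prod_(t < n.+1) e (a + n - t)%N) * (\prod_(t < n.+1) e (a + t)%N) = lam ^+ n *: e (a + n)%N.
Proof.
move=> ha; elim: n => [|n IH].
  by rewrite !big_ord1 /= !addn0 subn0 e_idem // expr0 scale1r.
rewrite [X in _ * X]big_ord_recr big_ord_recl /=.
have -> : \prod_(i < n.+1) e (a + n.+1 - bump 0 i)%N = \prod_(t < n.+1) e (a + n - t)%N.
  by apply: eq_bigr => i _; congr (e _); rewrite /bump /=; lia.
rewrite subn0 -mulrA (mulrA _ _ (e _)) IH -scalerAl -scalerAr.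
rewrite exprS mulrC -scalerA; congr (_ *: _).
by rewrite addnS mulrA eS_e_eS //; apply: (leq_trans ha); rewrite leq_addr.
Qed.

(* Locked so that the double product of [fproj] is never unfolded by accident. *)
Definition Fp p l := locked (fproj e d p l).
Definition edown p l := \prod_(t < l) e (p + l + l - t)%N.
Definition eup p l := \prod_(t < l) e (p + l + 1 + t)%N.

Lemma mem_Fp p l : M (p + l + l) (Fp p l).
Proof.
rewrite /Fp -lock; apply/memZ/mem_prod => m; apply: mem_prod => t.
by have := ltn_ord m; have := ltn_ord t => ht hm; apply: mem_e; lia.
Qed.

Lemma comm_Fp y p l :
  (forall m, (p < m)%N -> (m < p + l + l)%N -> GRing.comm y (e m)) -> GRing.comm y (Fp p l).
Proof.
rewrite /Fp -lock => h; apply/commrZ/commr_prod => m _; apply: commr_prod => t _.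
by have := ltn_ord m; have := ltn_ord t => ht hm; apply: h; lia.
Qed.

Lemma mem_comm_Fp y p l : M p y -> GRing.comm y (Fp p l).
Proof. by move=> hy; apply: comm_Fp => m h1 h2; apply: (mem_comm_e _ _ hy); lia. Qed.

Lemma e_comm_Fp m p l : (p + l + l < m)%N -> GRing.comm (e m) (Fp p l).
Proof. by move=> hm; apply: comm_Fp => i h1 h2; apply: e_comm_far; lia. Qed.

Lemma mem_edown p l : M (p + l + l).+1 (edown p l).
Proof. by apply: mem_prod => t; have := ltn_ord t => ht; apply: mem_e; lia. Qed.
Lemma mem_eup p l : M (p + l + l).+1 (eup p l).
Proof. by apply: mem_prod => t; have := ltn_ord t => ht; apply: mem_e; lia. Qed.

Lemma comm_edown y p l :
  (forall m, (p + l < m)%N -> (m <= p + l + l)%N -> GRing.comm y (e m)) ->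
  GRing.comm y (edown p l).
Proof. by move=> h; apply: commr_prod => t _; have := ltn_ord t => ht; apply: h; lia. Qed.
Lemma comm_eup y p l :
  (forall m, (p + l < m)%N -> (m <= p + l + l)%N -> GRing.comm y (e m)) ->
  GRing.comm y (eup p l).
Proof. by move=> h; apply: commr_prod => t _; have := ltn_ord t => ht; apply: h; lia. Qed.

Lemma edown_star p l : star (edown p l) = eup p l.
Proof.
rewrite /edown (star_prod hstar l (fun t => e (p + l + l - t)%N)); apply: eq_bigr => i _.
by have hi := ltn_ord i; rewrite e_star; [congr (e _) | ]; lia.
Qed.

Lemma eup_star p l : star (eup p l) = edown p l.
Proof. by rewrite -edown_star (starK hstar). Qed.

Lemma edown_eup p l : (1 <= l)%N -> edown p l * eup p l = lam ^+ l.-1 *: e (p + l + l)%N.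
Proof.
case: l => // n _; have := @e_down_up (p + n.+1 + 1) n; rewrite /edown /eup.
rewrite (_ : p + n.+1 + 1 + n = p + n.+1 + n.+1)%N; last lia.
move=> <-; last lia.
by congr (_ * _); apply: eq_bigr => i _; congr (e _); lia.
Qed.

Lemma edown1 p : edown p 1 = e p.+2.
Proof. by rewrite /edown big_ord1 /=; congr (e _); lia. Qed.
Lemma eup1 p : eup p 1 = e p.+2.
Proof. by rewrite /eup big_ord1 /=; congr (e _); lia. Qed.

Lemma edownS p l : edown p l.+1 = e (p + l + l).+2 * edown p.+1 l.
Proof.
rewrite /edown big_ord_recl /=; congr (_ * _); first by congr (e _); lia.
by apply: eq_bigr => i _; congr (e _); rewrite /= /bump leq0n add1n; lia.
Qed.
Lemma eupS p l : eup p l.+1 = eup p.+1 l * e (p + l + l).+2.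
Proof.
rewrite /eup big_ord_recr /=; congr (_ * _); last by congr (e _); lia.
by apply: eq_bigr => i _; congr (e _); rewrite /=; lia.
Qed.

Lemma Fp1 p : Fp p 1 = e p.+1.
Proof. by rewrite /Fp -lock /fproj !big_ord1 /= expr0 scale1r addn0 subn0 addn1. Qed.

Lemma FpS p l :
  Fp p l.+1 = d ^+ (2 * l) *: (eup p l * e (p + l + l).+1 * Fp p l * edown p l).
Proof.
rewrite /Fp -!lock /fproj.
have -> : \prod_(m < l.+1) \prod_(t < l.+1) e (p + l.+1 + m - t)%N =
    \prod_(m < l.+1) (e (p + l + 1 + m)%N * \prod_(t < l) e (p + l + m - t)%N).
  apply: eq_bigr => m _; rewrite big_ord_recl; congr (_ * _).
    by congr (e _); rewrite /=; lia.
  by apply: eq_bigr => t _; congr (e _); rewrite /= /bump leq0n add1n; lia.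
rewrite (@big_split_comm _ _ (fun m => e (p + l + 1 + m)%N)
  (fun m => \prod_(t < l) e (p + l + m - t)%N)); last first.
  move=> m m' h1 h2; apply: commr_prod => t _.
  by have := ltn_ord t => ht; apply: e_comm_far; lia.
rewrite [X in X * _]big_ord_recr [X in _ * X]big_ord_recr /=.
rewrite -scalerAr -scalerAl scalerA -exprD; congr (_ *: _).
  by congr (_ ^+ _); case: l => //= n; nia.
rewrite (_ : p + l + 1 + l = (p + l + l).+1)%N; last lia.
by rewrite /eup /edown !mulrA.
Qed.

Ltac pull_scalars := repeat (rewrite -scalerAl || rewrite -scalerAr); rewrite ?scalerA.

Lemma Fp_shift p l : (1 <= l)%N ->
  Fp p.+1 l = d ^+ (2 * l) *: (eup p l * Fp p l * edown p l).
Proof.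
elim: l p => // l IH p _.
have [-> | hl] := posnP l.
  rewrite !Fp1 eup1 edown1 eS_e_eS // scalerA mulnC /= expr2 -/(d ^+ 2).
  by rewrite -expr2 d2_lam scale1r.
rewrite FpS IH // eupS edownS FpS.
rewrite (_ : (p.+1 + l + l).+1 = (p + l + l).+2)%N; last lia.
set a := eup p.+1 l; set b := edown p.+1 l; set X := eup p l; set F := Fp p l.
set Y := edown p l; set E1 := e (p + l + l).+1; set E2 := e (p + l + l).+2.
have cXE2 : GRing.comm X E2.
  by apply/commr_sym/comm_eup => m h1 h2; apply: e_comm_far; lia.
have cYE2 : GRing.comm Y E2.
  by apply/commr_sym/comm_edown => m h1 h2; apply: e_comm_far; lia.
have cFE2 : GRing.comm F E2 by apply/commr_sym/e_comm_Fp; lia.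
have key : a * E2 * X * E1 * F * Y * E2 * b = lam *: (a * E2 * X * F * Y * b).
  rewrite -!mulrA (mulrCA_comm _ cYE2) (mulrCA_comm _ cFE2).
  rewrite (mulrCA_comm _ (commr_sym cXE2)) (mulrA E2) (mulrA _ E2).
  rewrite /E1 /E2 eS_e_eS; last lia.
  by rewrite -/E2; pull_scalars; rewrite -(mulrCA_comm _ (commr_sym cXE2)) !mulrA.
pull_scalars; rewrite !mulrA key; pull_scalars.
by congr (_ *: _); rewrite mulnS exprD -[LHS]mulr1 -d2_lam; ring.
Qed.


Ltac solve_mem :=
  repeat first [apply: memM | apply: memZ | apply: memB | apply: memD | apply: mem_star];
  first [ by apply: (mem_le _ (mem_Fp _ _)); lia | by apply: (mem_le _ (mem_eup _ _)); lia
        | by apply: (mem_le _ (mem_edown _ _)); lia | by apply: mem_e; lia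
        | by apply: mem_alg | by apply: mem1
        | by match goal with H : M ?n ?x |- M _ ?x => apply: (mem_le _ H); lia end ].

Ltac solve_lam hl :=
  rewrite (d2lE hl) ?exprS -?(lamS hl); field; rewrite ?lam_neq0 ?lamX_neq0 //.

Definition jones_props p l : Prop :=
  [/\ Fp p l * Fp p l = Fp p l /\ star (Fp p l) = Fp p l,
      (forall x, M (p + l) x -> exists y, M p y /\
         (forall z, M p z -> tr (p + l) (y * z) = tr (p + l) (x * z)) /\
         Fp p l * x * Fp p l = y * Fp p l),
      (forall z, M (p + l) z -> tr (p + l + l) (Fp p l * z) = lam ^+ l * tr (p + l) z),
      (forall x, M (p + l + l) x -> exists y, M (p + l) y /\ x * Fp p l = y * Fp p l)
    & Fp p l * e (p + l + l) * Fp p l = lam *: Fp p l].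

Lemma jones_props1 p : jones_props p 1.
Proof.
rewrite /jones_props Fp1 !addn1; split.
- by rewrite e_idem // e_star.
- by move=> x hx; case: (cexp_e (ltn0Sn p) hx) => y [[hy hc] he]; exists y.
- by move=> z hz; rewrite tr_eM // expr1.
- by move=> x hx; apply: pushdown_e.
- by rewrite e_eS_e.
Qed.

Section InductionStep.
Variables (p l : nat).
Hypothesis hl : (1 <= l)%N.
Hypothesis hF : jones_props p l.

Let F := Fp p l.
Let X := eup p l.
Let Y := edown p l.
Let E0 := e (p + l + l).
Let E1 := e (p + l + l).+1.

Let cE1F : GRing.comm E1 F. Proof. by apply: e_comm_Fp; lia. Qed.
Let YX : Y * X = lam ^+ l.-1 *: E0. Proof. exact: edown_eup. Qed.
Let E1E0E1 : E1 * E0 * E1 = lam *: E1. Proof. by rewrite /E1 /E0 eS_e_eS //; lia. Qed.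

Lemma FpS_idem : Fp p l.+1 * Fp p l.+1 = Fp p l.+1.
Proof.
case: hF => [[FF _] _ _ _ F5]; rewrite !FpS -/F -/X -/Y -/E1; pull_scalars.
rewrite -!mulrA (mulr_subst2 _ YX); pull_scalars.
rewrite [E1 * (F * (E0 * _))](mulrCA_comm _ cE1F) (mulr_subst3 _ E1E0E1); pull_scalars.
rewrite (mulrCA_comm _ cE1F) (mulr_subst2 _ FF) -(mulrCA_comm _ cE1F).
by congr (_ *: _); rewrite -mulrA lamS // -mulrA d2n_lamn mulr1.
Qed.

Lemma FpS_star : star (Fp p l.+1) = Fp p l.+1.
Proof.
case: hF => [[_ Fst] _ _ _ _].
rewrite !FpS (starZ_real _ _ (d2l_real l)) // !(starM hstar) Fst edown_star eup_star.
by rewrite e_star // -!mulrA (mulrCA_comm _ (commr_sym cE1F)).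
Qed.

Lemma Fp_edown_eup_Fp : F * Y * X * F = lam ^+ l *: F.
Proof.
case: hF => [_ _ _ _ F5].
by rewrite -(mulrA F Y) YX -scalerAr -scalerAl F5 scalerA lamS.
Qed.

Lemma edown_eup_sandwich x y : M (p + l).+1 x -> M (p + l) y ->
  e (p + l).+1 * x * e (p + l).+1 = y * e (p + l).+1 -> Y * x * X = y * (Y * X).
Proof.
rewrite /X /Y; case: l hl => // n _ hx hy he.
set W := \prod_(t < n) e (p + n.+1 + n.+1 - t)%N.
have hWd : edown p n.+1 = W * e (p + n.+1).+1.
  by rewrite /edown big_ord_recr /=; congr (_ * e _); lia.
have hWa : eup p n.+1 = e (p + n.+1).+1 * star W.
  by rewrite -edown_star hWd (starM hstar) e_star.
have cyW : GRing.comm y W.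
  by apply: commr_prod => t _; have := ltn_ord t => ht; apply: (mem_comm_e _ _ hy); lia.
rewrite hWd hWa -!mulrA (mulr_subst3 _ he) -mulrA (mulrCA_comm _ (commr_sym cyW)).
by rewrite (mulr_subst2 _ (e_idem _)).
Qed.

Lemma FpS_cexp x : M (p + l.+1) x -> exists y, M p y /\
    (forall z, M p z -> tr (p + l.+1) (y * z) = tr (p + l.+1) (x * z)) /\
    Fp p l.+1 * x * Fp p l.+1 = y * Fp p l.+1.
Proof.
case: hF => [_ Fcexp _ _ _]; rewrite addnS => hx.
case: (cexp_e (ltn0Sn (p + l)) hx) => y0 [[hy0 hc0] he0].
case: (Fcexp y0 hy0) => z0 [hz0 [hc1 he1]].
exists z0; split => //; split.
  move=> w hw; have hw' : M (p + l) w by apply: (mem_le _ hw); lia.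
  rewrite tr_succ; last by apply: memM => //; apply: (mem_le _ hz0); lia.
  by rewrite hc1 // -tr_succ ?hc0 //; apply: memM.
have YxX := edown_eup_sandwich hx hy0 he0.
rewrite YX -scalerAr in YxX.
have cE1y : GRing.comm E1 y0 by apply/commr_sym/(mem_comm_e _ _ hy0); lia.
have cXz : GRing.comm X z0.
  by apply/commr_sym/comm_eup => m h1 h2; apply: (mem_comm_e _ _ hz0); lia.
rewrite !FpS -/F -/X -/Y -/E1; pull_scalars.
rewrite -!mulrA (mulr_subst3 _ YxX); pull_scalars; rewrite -!mulrA.
rewrite [E1 * (F * (y0 * _))](mulrCA_comm _ cE1F) (mulrCA_comm _ cE1y) -/E0.
rewrite (mulr_subst3 _ E1E0E1); pull_scalars.
rewrite (mulrCA_comm _ cE1F) (mulr_subst3 _ he1) -!mulrA (mulrCA_comm _ cXz).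
by rewrite -(mulrCA_comm _ cE1F); congr (_ *: _); solve_lam hl.
Qed.

Lemma FpS_trace z : M (p + l.+1) z ->
  tr (p + l.+1 + l.+1) (Fp p l.+1 * z) = lam ^+ l.+1 * tr (p + l.+1) z.
Proof.
case: hF => [_ _ Ftr _ _].
rewrite (_ : p + l.+1 + l.+1 = (p + l + l).+2)%N; last lia.
rewrite addnS => hz.
case: (cexp_e (ltn0Sn (p + l)) hz) => y0 [[hy0 hc0] he0].
have YzX := edown_eup_sandwich hz hy0 he0.
rewrite YX -scalerAr in YzX.
rewrite FpS -scalerAl trZ; last by solve_mem.
rewrite -/F -/X -/Y -/E1 -!mulrA tr_comm; try by solve_mem.
rewrite -!mulrA (mulrA Y) YzX; pull_scalars.
rewrite trZ; last by solve_mem.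
rewrite /E1 tr_eM; [|lia|by solve_mem].
rewrite (mulrA F) tr_comm; try by solve_mem.
rewrite tr_eM; [|lia|by solve_mem].
rewrite Ftr //.
have -> : tr (p + l) y0 = tr (p + l).+1 z.
  by rewrite -tr_succ // -(mulr1 y0) -(mulr1 z) hc0 //; apply: mem1.
solve_lam hl.
Qed.

Lemma FpS_absorb : Fp p l.+1 * e (p + l.+1 + l.+1) * Fp p l.+1 = lam *: Fp p l.+1.
Proof.
case: hF => [_ _ _ _ F5].
rewrite (_ : p + l.+1 + l.+1 = (p + l + l).+2)%N; last lia.
rewrite !FpS -/F -/X -/Y -/E1; pull_scalars.
set E2 := e (p + l + l).+2.
have cYE2 : GRing.comm Y E2.
  by apply/commr_sym/comm_edown => m h1 h2; apply: e_comm_far; lia.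
have cFE2 : GRing.comm F E2 by apply/commr_sym/e_comm_Fp; lia.
have E1E2E1 : E1 * E2 * E1 = lam *: E1 by rewrite /E1 /E2 e_eS_e //; lia.
rewrite -!mulrA (mulrCA_comm _ cYE2) (mulrCA_comm _ cFE2) (mulr_subst2 _ YX); pull_scalars.
rewrite [E1 * (F * Y)](mulrCA_comm _ cE1F) (mulr_subst3 _ F5); pull_scalars.
rewrite (mulrCA_comm _ (commr_sym cFE2)) [E1 * (F * _)](mulrCA_comm _ cE1F).
rewrite (mulr_subst3 _ E1E2E1); pull_scalars.
by rewrite -(mulrCA_comm _ cE1F); congr (_ *: _); solve_lam hl.
Qed.

(* The pushdown y of x * eup is moved down further by the pushdown property of
   f^{p+l+1}_{p+1} = d^{2l} eup F edown; cancelling edown * eup against F leaves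
   y F = t' eup F, and e_{p+2l+1} commutes past F. *)
Lemma FpS_pushdown : jones_props p.+1 l ->
  forall x, M (p + l.+1 + l.+1) x -> exists y, M (p + l.+1) y /\
    x * Fp p l.+1 = y * Fp p l.+1.
Proof.
case=> _ _ _ Gpush _ x hx.
have FYXF := Fp_edown_eup_Fp.
have [y [hy hxy]] : exists y, M (p + l + l).+1 y /\ x * X * E1 = y * E1.
  by apply: pushdown_e; [lia | solve_mem].
have [t [ht htG]] : exists t, M (p.+1 + l) t /\
    y * F * Y * Fp p.+1 l = t * Fp p.+1 l.
  by apply: Gpush; solve_mem.
set c := d ^+ (2 * l).
have GXF : Fp p.+1 l * (X * F) = X * F.
  rewrite Fp_shift // -/F -/X -/Y -scalerAl.
  rewrite (_ : X * F * Y * (X * F) = X * (F * Y * X * F)); last by rewrite !mulrA.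
  by rewrite FYXF -scalerAr scalerA /c d2n_lamn scale1r.
have yF : y * F = c *: (t * X * F).
  have := congr1 (fun w => w * (X * F)) htG; rewrite /= -!mulrA GXF !mulrA.
  rewrite (_ : y * F * Y * X * F = y * (F * Y * X * F)); last by rewrite !mulrA.
  rewrite FYXF -scalerAr => /(congr1 (fun w => c *: w)).
  by rewrite scalerA /c d2n_lamn scale1r.
exists (c *: t); split; first by solve_mem.
rewrite FpS -/c -/F -/X -/Y -/E1 -!scalerAr; congr (_ *: _).
rewrite !mulrA hxy -(mulrA y E1) cE1F mulrA yF -!scalerAl; congr (_ *: _).
by rewrite -(mulrA _ F) -cE1F !mulrA.
Qed.

End InductionStep.

Lemma Fp_jones l : (1 <= l)%N -> forall p, jones_props p l.
Proof.
elim: l => // l IH _ p.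
have [-> | hl] := posnP l; first exact: jones_props1.
have [hFp hFpS] := (IH hl p, IH hl p.+1).
split; first split.
- exact: FpS_idem.
- exact: FpS_star.
- exact: FpS_cexp.
- exact: FpS_trace.
- exact: FpS_pushdown.
- exact: FpS_absorb.
Qed.


Lemma Fp_TL_next p l : (1 <= l)%N ->
  Fp (p + l) l * Fp p l * Fp (p + l) l = lam ^+ l *: Fp (p + l) l.
Proof.
move=> hl; case: (Fp_jones hl p) => _ _ Ftr _ _.
case: (Fp_jones hl (p + l)) => _ Scexp _ _ _.
case: (Scexp (Fp p l) (mem_Fp _ _)) => y [hy [hc ->]].
rewrite -mulr_algl; congr (_ * _).
apply: (eq_by_tr (leq_addr l (p + l))) => // [|z hz]; first exact: mem_alg.
rewrite hc // Ftr // mulr_algl trZ; last by apply: (mem_le _ hz); lia.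
by rewrite (tr_le _ hz) //; lia.
Qed.

(* X := F S F - c F satisfies X = X^*, X^2 = -c X and tr X = 0, so tr (X^* X) = 0
   and X = 0 by faithfulness. *)
Lemma Fp_TL_prev p l : (1 <= l)%N ->
  Fp p l * Fp (p + l) l * Fp p l = lam ^+ l *: Fp p l.
Proof.
move=> hl; case: (Fp_jones hl p) => [[FF Fst] _ Ftr _ _].
case: (Fp_jones hl (p + l)) => [[SS Sst] _ Str _ _].
have TL := Fp_TL_next p hl.
set F := Fp p l; set S := Fp (p + l) l; set c := lam ^+ l.
set r := (p + l + l + l)%N.
have hF : M r F by apply: (mem_le _ (mem_Fp _ _)); lia.
have hS : M r S by apply: mem_Fp.
have hc : c \is Num.real by apply: rpredX; exact: lam_real.
set X := F * S * F - c *: F.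
have hX : M r X by rewrite /X; solve_mem.
have Xst : star X = X.
  by rewrite /X (starB hstar) (starZ_real _ _ hc) // !(starM hstar) Fst Sst mulrA.
have XX : X * X = - c *: X.
  rewrite /X mulrBl !mulrBr -!scalerAl -!scalerAr.
  rewrite (_ : F * S * F * (F * S * F) = F * (S * F * S) * F); last first.
    by rewrite -!mulrA (mulrA F F) FF.
  rewrite TL -scalerAr -scalerAl !mulrA FF -(mulrA F S F) -!mulrA FF !mulrA.
  by rewrite -/c -/F subrr sub0r scaleNr scalerBr.
have trX : tr r X = 0.
  rewrite /X trB; try by solve_mem.
  rewrite trZ // -(mulrA F) (@tr_comm _ F (S * F)); [|by []|by apply: memM].
  rewrite -mulrA FF Str; last exact: mem_Fp.
  by rewrite (tr_le _ (mem_Fp _ _)) ?subrr //; lia.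
suff : X = 0 by move/eqP; rewrite subr_eq0 => /eqP.
by apply: (tr_faithful hX); rewrite Xst XX trZ // trX mulr0.
Qed.

Section SubTower.
Variables (j k : nat).
Hypothesis hk : (1 <= k)%N.

Let subM n := M (j + n * k)%N.
Let subtr n := tr (j + n * k)%N.
Let g := gproj e d j k.

Lemma gprojE m : g m.+1 = Fp (j + m * k) k.
Proof. by rewrite /g /gproj /Fp -lock. Qed.

Lemma subtower_lam : ((d ^+ k) ^+ 2)^-1 = lam ^+ k.
Proof. by rewrite /lam exprVn -!exprM mulnC. Qed.

Let addS m : (j + m.+1 * k = j + m * k + k)%N. Proof. lia. Qed.
Let addSS m : (j + m.+2 * k = j + m * k + k + k)%N. Proof. lia. Qed.

Lemma subtower_incl n x : subM n x -> subM n.+1 x /\ subtr n.+1 x = subtr n x.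
Proof.
move=> hx; have hle : (j + n * k <= j + n.+1 * k)%N.
  by rewrite leq_add2l leq_mul2r leqnSn orbT.
by split; [apply: (mem_le hle hx) | apply: tr_le].
Qed.

Lemma subtower_mem_g n : (1 <= n)%N -> subM n.+1 (g n).
Proof. by case: n => // m _; rewrite /subM gprojE addSS; apply: mem_Fp. Qed.

Lemma subtower_TL :
  [/\ forall i, (1 <= i)%N -> g i * g i = g i /\ star (g i) = g i,
      forall i i', (1 <= i)%N -> (i.+1 < i')%N -> g i * g i' = g i' * g i
    & forall i, (1 <= i)%N ->
        g i * g i.+1 * g i = ((d ^+ k) ^+ 2)^-1 *: g i /\
        g i.+1 * g i * g i.+1 = ((d ^+ k) ^+ 2)^-1 *: g i.+1].
Proof.
split.
- by case=> // m _; rewrite gprojE; case: (Fp_jones hk (j + m * k)) => [[]].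
- case=> // m [//|m'] _ hmm; rewrite !gprojE; apply: mem_comm_Fp.
  apply: (mem_le _ (mem_Fp _ _)).
  have : (m.+2 * k <= m' * k)%N by rewrite leq_mul2r; apply/orP; right; lia.
  lia.
- by case=> // m _; rewrite !gprojE subtower_lam addS Fp_TL_next // Fp_TL_prev.
Qed.

Lemma subtower_cexp n : (1 <= n)%N -> forall x, subM n x ->
  exists y, cexp subM subtr n x y /\ g n * x * g n = y * g n.
Proof.
case: n => // m _ x; rewrite /cexp /subM /subtr /= gprojE addS => hx.
case: (Fp_jones hk (j + m * k)) => _ Fcexp _ _ _.
by case: (Fcexp x hx) => y [hy [hc he]]; exists y.
Qed.

Lemma subtower_markov n : (1 <= n)%N ->
  cexp subM subtr n.+1 (g n) (((d ^+ k) ^+ 2)^-1 %:A).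
Proof.
case: n => // m _; rewrite /cexp /subM /subtr /= gprojE addSS addS subtower_lam.
split; first exact: mem_alg.
case: (Fp_jones hk (j + m * k)) => _ _ Ftr _ _.
move=> z hz; rewrite Ftr // mulr_algl trZ; last by apply: (mem_le _ hz); lia.
by rewrite (tr_le _ hz) //; lia.
Qed.

Lemma subtower_pushdown n : (1 <= n)%N ->
  (forall x, subM n.+1 x -> exists y, subM n y /\ x * g n = y * g n) /\
  (forall y, subM n y -> exists x, subM n.+1 x /\ y * g n = x * g n).
Proof.
case: n => // m _; rewrite /subM gprojE addSS addS.
case: (Fp_jones hk (j + m * k)) => _ _ _ Fpush _.
split; first exact: Fpush.
by move=> y hy; exists y; split => //; apply: (mem_le _ hy); lia.
Qed.

End SubTower.

End MarkovTower.

Theorem mainTheorem8 (C : numClosedFieldType) (A : algType C)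
  (star : A -> A) (M : nat -> A -> Prop) (tr : nat -> A -> C)
  (e : nat -> A) (d : C) (j k : nat) :
  (1 <= k)%N ->
  star_algebra star ->
  markov_tower star M tr e d ->
  markov_tower star (fun n => M (j + n * k)%N) (fun n => tr (j + n * k)%N)
    (gproj e d j k) (d ^+ k).
Proof.
move=> hk hstar hmt; split; first exact/exprn_gt0/(d_gt0 hmt).
split; split.
- by move=> n; apply: (tower_algebra hmt).
- exact: (subtower_incl hmt).
- exact: (subtower_mem_g hmt j hk).
- exact: (subtower_TL hstar hmt j hk).
- exact: (subtower_cexp hstar hmt hk).
- exact: (subtower_markov hstar hmt j hk).
- exact: (subtower_pushdown hstar hmt j hk).
Qed.
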